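(* Let $M \le N$, let $F:\mathbb{R}^M\to\mathbb{R}^M$ be a differentiable latent map, and let $G:\mathbb{R}^M\to\mathbb{R}^N$, $G(\bm z)=\bm B\bm z$, be a linear observation model with $\bm B\in\mathbb{R}^{N\times M}$ of full rank. Let $\bm J(\bm z)=\partial F(\bm z)/\partial \bm z$ and suppose $$\tilde\sigma_{\max}:=\sup\{\|\bm J(\bm z)\|_2=\sigma_{\max}(\bm J(\bm z)) : \bm z\in\mathbb{R}^M\}$$ satisfies $1<\tilde\sigma_{\max}<\infty$. Choose the forcing strength $\alpha\in(\alpha^*,1]$, where $\alpha^*:=1-\tilde\sigma_{\max}^{-1}$, and set $$\rho:=(1-\alpha)\,\tilde\sigma_{\max}.$$ Then $\rho<1$, and the forced system $F\circ\delta_{\alpha,\bm B}$ is globally contracting with rate $\rho$: for every teacher sequence $(\bm x_t)_{t\ge 0}$ in $\mathbb{R}^N$, every $t$ and every $\bm z\in\mathbb{R}^M$, the Jacobian of the forced map $\bm z\mapsto F(\delta_{\alpha,\bm B}(\bm z,\bm x_t))$ has spectral norm at most $\rho$. Moreover, the largest Lyapunov exponent of the forced system (along any orbit) satisfies $$\lambda_{\mathrm{GTF}}\le \log\rho<0.$$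
   Context: Generalized teacher forcing: for a forcing strength $\alpha\in[0,1]$ and observation matrix $\bm B$ with Moore–Penrose pseudo-inverse $\bm B^+$, define $\delta_{\alpha,\bm B}(\bm z,\bm x)=(\bm I-\alpha\bm B^+\bm B)\bm z+\alpha\bm B^+\bm x$. The forced system is the (non-autonomous) recursion $\bm z_t=F(\delta_{\alpha,\bm B}(\bm z_{t-1},\bm x_{t-1}))$ driven by a given data (teacher) sequence $\bm x_t\in\mathbb{R}^N$. For an iterated (possibly time-dependent) map with Jacobians $\bm J_t$ evaluated along the orbit starting at $\bm z_0$, the largest Lyapunov exponent is $\lambda(\bm z_0)=\lim_{T\to\infty}\frac1T\log\|\bm J_T\bm J_{T-1}\cdots\bm J_1\|_2$; the map is called contracting at $\bm z_0$ if $\lambda(\bm z_0)<0$ and divergent if $\lambda(\bm z_0)>0$. $\lambda_{\mathrm{GTF}}$ denotes this exponent for the forced system, with $\bm J_t$ the Jacobian of $\bm z\mapsto F(\delta_{\alpha,\bm B}(\bm z,\bm x_{t-1}))$ at $\bm z_{t-1}$. *)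

From HB Require Import structures.
From mathcomp Require Import all_boot all_order all_algebra.
From mathcomp Require Import all_classical all_reals all_analysis.
Set Implicit Arguments. Unset Strict Implicit. Unset Printing Implicit Defensive.
Import Order.TTheory GRing.Theory Num.Theory.
Import numFieldNormedType.Exports.
Local Open Scope classical_set_scope.
Local Open Scope ring_scope.

Definition enorm (R : realType) (n : nat) (v : 'cV[R]_n) : R :=
  Num.sqrt (\sum_(i < n) (v i 0) ^+ 2).

Definition spec_norm (R : realType) (m n : nat) (A : 'M[R]_(m, n)) : R :=
  sup [set enorm (A *m v) | v in [set v : 'cV[R]_n | enorm v <= 1]].

Definition is_MP_pinv (R : realType) (m n : nat)
    (A : 'M[R]_(m, n)) (X : 'M[R]_(n, m)) : Prop :=
  [/\ A *m X *m A = A, X *m A *m X = X,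
      (A *m X)^T = A *m X & (X *m A)^T = X *m A].

(* Jacobian matrix (column convention): column j is dF(z) e_j. *)
Definition jac (R : realType) (m n : nat) (F : 'cV[R]_m -> 'cV[R]_n)
    (z : 'cV[R]_m) : 'M[R]_(n, m) :=
  \matrix_(i < n, j < m) ('d F z (delta_mx j (0 : 'I_1))) i 0.

Definition gtf_delta (R : realType) (M N : nat) (alpha : R)
    (B : 'M[R]_(N, M)) (Bp : 'M[R]_(M, N)) (z : 'cV[R]_M) (x : 'cV[R]_N)
    : 'cV[R]_M :=
  (1%:M - alpha *: (Bp *m B)) *m z + alpha *: (Bp *m x).

Definition forced_map (R : realType) (M N : nat) (F : 'cV[R]_M -> 'cV[R]_M)
    (alpha : R) (B : 'M[R]_(N, M)) (Bp : 'M[R]_(M, N))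
    (x : nat -> 'cV[R]_N) (t : nat) : 'cV[R]_M -> 'cV[R]_M :=
  fun z => F (gtf_delta alpha B Bp z (x t)).

Fixpoint forced_orbit (R : realType) (M N : nat) (F : 'cV[R]_M -> 'cV[R]_M)
    (alpha : R) (B : 'M[R]_(N, M)) (Bp : 'M[R]_(M, N))
    (x : nat -> 'cV[R]_N) (z0 : 'cV[R]_M) (t : nat) : 'cV[R]_M :=
  match t with
  | 0 => z0
  | t'.+1 => forced_map F alpha B Bp x t' (forced_orbit F alpha B Bp x z0 t')
  end.

(* Product J_T J_{T-1} ... J_1 with J_t = Jacobian of the forced map at time
   t-1 evaluated at z_{t-1}; the empty product (T = 0) is the identity. *)
Fixpoint forced_jac_prod (R : realType) (M N : nat) (F : 'cV[R]_M -> 'cV[R]_M)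
    (alpha : R) (B : 'M[R]_(N, M)) (Bp : 'M[R]_(M, N))
    (x : nat -> 'cV[R]_N) (z0 : 'cV[R]_M) (T : nat) : 'M[R]_M :=
  match T with
  | 0 => 1%:M
  | T'.+1 => jac (forced_map F alpha B Bp x T') (forced_orbit F alpha B Bp x z0 T')
             *m forced_jac_prod F alpha B Bp x z0 T'
  end.

(* Extended-real logarithm: log 0 = -oo (norms are nonnegative). *)
Definition elog (R : realType) (r : R) : \bar R :=
  if 0 < r then (ln r)%:E else -oo%E.

(* Largest Lyapunov exponent along the orbit from z0, as the upper limit
   limsup_T (1/T) log ||J_T ... J_1||_2 (equals the limit when it exists). *)
Definition lyap_gtf (R : realType) (M N : nat) (F : 'cV[R]_M -> 'cV[R]_M)
    (alpha : R) (B : 'M[R]_(N, M)) (Bp : 'M[R]_(M, N))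
    (x : nat -> 'cV[R]_N) (z0 : 'cV[R]_M) : \bar R :=
  limn_esup (fun T : nat =>
    ((T%:R)^-1)%:E * elog (spec_norm (forced_jac_prod F alpha B Bp x z0 T)))%E.

(* Full column rank gives [B^+ B = I], so [delta_{alpha,B}(z, x) =
   (1 - alpha) z + alpha B^+ x] is a homothety plus a translation and the
   chain rule turns the Jacobian of the forced map into [(1 - alpha) J]
   evaluated at a shifted point; its spectral norm is thus at most
   [(1 - alpha) sigma_max = rho].  By submultiplicativity of the spectral norm
   the product of [T] such Jacobians has norm at most [rho^T], so every term
   [(1/T) log ||J_T ... J_1||] with [T >= 1] is at most [log rho], and so is
   their limsup.  Finally [rho < 1] is a rearrangement of
   [alpha > 1 - sigma_max^-1]. *)

From HB Require Import structures.
From mathcomp Require Import all_boot all_order all_algebra.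
From mathcomp Require Import all_classical all_reals all_analysis.
Import Order.TTheory GRing.Theory Num.Theory.
Import numFieldNormedType.Exports.
Local Open Scope classical_set_scope.
Local Open Scope ring_scope.

Section euclidean_norm.
Context {R : realType} {n : nat}.
Implicit Type v : 'cV[R]_n.

Lemma enorm_ge0 v : 0 <= enorm v.
Proof. exact: sqrtr_ge0. Qed.

Lemma enorm0 : enorm (0 : 'cV[R]_n) = 0.
Proof. by rewrite /enorm big1 ?sqrtr0 // => i _; rewrite mxE expr0n. Qed.

Lemma enormZ (a : R) v : enorm (a *: v) = `|a| * enorm v.
Proof.
rewrite /enorm (eq_bigr (fun i => a ^+ 2 * v i 0 ^+ 2)); last first.
  by move=> i _; rewrite mxE exprMn.
by rewrite -mulr_sumr sqrtrM ?sqr_ge0 // sqrtr_sqr.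
Qed.

Lemma coord_le_enorm v i : `|v i 0| <= enorm v.
Proof.
have sq_ge0 j : 0 <= v j 0 ^+ 2 by rewrite sqr_ge0.
rewrite /enorm -(sqrtr_sqr (v i 0)) ler_sqrt; last exact: sumr_ge0.
by rewrite (bigD1 i) //= lerDl; apply: sumr_ge0.
Qed.

Lemma enorm_eq0 v : (enorm v == 0) = (v == 0).
Proof.
apply/eqP/eqP => [v0|->]; last exact: enorm0.
apply/matrixP => i j; rewrite (ord1 j) mxE; apply/eqP.
by rewrite -normr_le0 -v0 coord_le_enorm.
Qed.

End euclidean_norm.

Section spectral_norm.
Context {R : realType}.

Definition spec_norm_set {m n} (A : 'M[R]_(m, n)) :=
  [set enorm (A *m v) | v in [set v : 'cV[R]_n | enorm v <= 1]].

Lemma spec_norm_set0 {m n} (A : 'M[R]_(m, n)) : spec_norm_set A 0.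
Proof. by exists 0; rewrite /= ?mulmx0 enorm0. Qed.

(* On the unit ball every coordinate has modulus at most 1, so [|(A v)_i|]
   is bounded by the i-th absolute row sum of [A]. *)
Lemma has_ubound_spec_norm_set {m n} (A : 'M[R]_(m, n)) :
  has_ubound (spec_norm_set A).
Proof.
exists (Num.sqrt (\sum_(i < m) (\sum_(j < n) `|A i j|) ^+ 2)).
move=> _ [v /= v1 <-]; rewrite /enorm ler_sqrt; last first.
  by apply: sumr_ge0 => i _; rewrite sqr_ge0.
apply: ler_sum => i _; rewrite -[X in X <= _]real_normK ?num_real //.
apply: lerXn2r; rewrite ?nnegrE ?normr_ge0 ?sumr_ge0 //.
rewrite mxE; apply: le_trans (ler_norm_sum _ _ _) _.
apply: ler_sum => j _; rewrite normrM -[leRHS]mulr1 ler_wpM2l //.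
exact: le_trans (coord_le_enorm _ _) v1.
Qed.

Lemma spec_norm_ge0 {m n} (A : 'M[R]_(m, n)) : 0 <= spec_norm A.
Proof.
by have := ub_le_sup (has_ubound_spec_norm_set A) (spec_norm_set0 A).
Qed.

Lemma enorm_mulmx_le {m n} (A : 'M[R]_(m, n)) v :
  enorm (A *m v) <= spec_norm A * enorm v.
Proof.
have [/eqP|v_neq0] := eqVneq (enorm v) 0.
  by rewrite enorm_eq0 => /eqP->; rewrite mulmx0 !enorm0 mulr0.
have v_gt0 : 0 < enorm v by rewrite lt_def v_neq0 enorm_ge0.
have normalized : spec_norm_set A (enorm (A *m ((enorm v)^-1 *: v))).
  by exists ((enorm v)^-1 *: v); rewrite //= enormZ gtr0_norm ?invr_gt0 ?mulVf.
have := ub_le_sup (has_ubound_spec_norm_set A) normalized.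
by rewrite -scalemxAr enormZ gtr0_norm ?invr_gt0 // ler_pdivrMl // mulrC.
Qed.

Lemma spec_norm_le {m n} (A : 'M[R]_(m, n)) c : 0 <= c ->
  (forall v, enorm (A *m v) <= c * enorm v) -> spec_norm A <= c.
Proof.
move=> c_ge0 Ac; apply: ge_sup; first by exists 0; exact: spec_norm_set0.
move=> _ [v /= v1 <-]; apply: le_trans (Ac v) _.
by rewrite -[leRHS]mulr1 ler_wpM2l.
Qed.

Lemma spec_normM {m n p} (A : 'M[R]_(m, n)) (B : 'M[R]_(n, p)) :
  spec_norm (A *m B) <= spec_norm A * spec_norm B.
Proof.
apply: spec_norm_le => [|v]; first by rewrite mulr_ge0 ?spec_norm_ge0.
rewrite -mulmxA; apply: le_trans (enorm_mulmx_le _ _) _.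
by rewrite -mulrA ler_wpM2l ?spec_norm_ge0 ?enorm_mulmx_le.
Qed.

Lemma spec_norm1 {n} : spec_norm (1%:M : 'M[R]_n) <= 1.
Proof. by apply: spec_norm_le => // v; rewrite mul1mx mul1r. Qed.

Lemma spec_normZ {m n} (c : R) (A : 'M[R]_(m, n)) :
  spec_norm (c *: A) = `|c| * spec_norm A.
Proof.
have le_normZ k (X : 'M[R]_(m, n)) : spec_norm (k *: X) <= `|k| * spec_norm X.
  apply: spec_norm_le => [|v]; first by rewrite mulr_ge0 ?spec_norm_ge0.
  by rewrite -scalemxAl enormZ -mulrA ler_wpM2l ?enorm_mulmx_le.
apply/le_anti; rewrite le_normZ /=.
have [->|c_neq0] := eqVneq c 0; first by rewrite normr0 mul0r spec_norm_ge0.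
rewrite mulrC -ler_pdivlMr ?normr_gt0 // mulrC -normfV.
by rewrite -[X in spec_norm X](scalerK c_neq0) le_normZ.
Qed.

End spectral_norm.

Lemma MP_pinv_left_inverse (R : realType) {m n} (B : 'M[R]_(n, m)) Bp :
  row_full B -> is_MP_pinv B Bp -> Bp *m B = 1%:M.
Proof.
case/row_fullP=> C CB [BBpB _ _ _].
by rewrite -[Bp *m B]mul1mx -CB -!mulmxA (mulmxA B) BBpB.
Qed.

Lemma jac_comp_affine (R : realType) {m n} (F : 'cV[R]_m -> 'cV[R]_n)
    (c : R) (d : 'cV[R]_m) z :
  differentiable F (c *: z + d) ->
  jac (fun w => F (c *: w + d)) z = c *: jac F (c *: z + d).
Proof.
move=> dF; have -> : (fun w => F (c *: w + d)) = F \o ( *:%R c + cst d) by [].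
have dg : 'd ( *:%R c + cst d) z = *:%R c :> ('cV[R]_m -> 'cV[R]_m).
  by rewrite diff_val addr0.
have dFg : 'd (F \o ( *:%R c + cst d)) z = 'd F (c *: z + d) \o *:%R c
    :> ('cV[R]_m -> 'cV[R]_n).
  (* Rewriting the point to [c *: z + d] before matching [dF] keeps the
     unifier from unfolding [differentiable]. *)
  have gz : ( *:%R c + cst d) z = c *: z + d by [].
  have := @diff_comp _ _ _ _ ( *:%R c + cst d) F z.
  rewrite gz dg; apply; last exact: dF.
  exact: differentiableD.
apply/matrixP => i j; rewrite [LHS]mxE dFg.
by rewrite [in RHS]mxE [X in _ * X]mxE /comp linearZ mxE.
Qed.

Section forced_system.
Context {R : realType} {M N : nat} {F : 'cV[R]_M -> 'cV[R]_M}
  {alpha : R} {B : 'M[R]_(N, M)} {Bp : 'M[R]_(M, N)} {x : nat -> 'cV[R]_N}.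
Hypothesis BpB : Bp *m B = 1%:M.

Lemma forced_mapE t :
  forced_map F alpha B Bp x t =
  fun z => F ((1 - alpha) *: z + alpha *: (Bp *m x t)).
Proof.
apply/funext => z; rewrite /forced_map /gtf_delta BpB scalemx1.
by rewrite -(raddfB (@scalar_mx _ M)) mul_scalar_mx.
Qed.

Lemma spec_norm_jac_forced_map_le (s : R) t z :
  (forall z, differentiable F z) -> (forall z, spec_norm (jac F z) <= s) ->
  spec_norm (jac (forced_map F alpha B Bp x t) z) <= `|1 - alpha| * s.
Proof.
move=> dF JFs; rewrite forced_mapE jac_comp_affine // spec_normZ.
by rewrite ler_wpM2l.
Qed.

Lemma spec_norm_forced_jac_prod_le (r : R) z0 T : 0 <= r ->
  (forall t z, spec_norm (jac (forced_map F alpha B Bp x t) z) <= r) ->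
  spec_norm (forced_jac_prod F alpha B Bp x z0 T) <= r ^+ T.
Proof.
move=> r_ge0 Jr; elim: T => [|T IH] /=; first exact: spec_norm1.
apply: le_trans (spec_normM _ _) _; rewrite exprS.
by apply: ler_pM; rewrite ?spec_norm_ge0.
Qed.

End forced_system.

Section extended_log.
Context {R : realType}.
Local Open Scope ereal_scope.

Lemma elog_lt0 (r : R) : (r < 1)%R -> elog r < 0.
Proof.
move=> r_lt1; rewrite /elog; case: ifPn => // r_gt0.
by rewrite lte_fin ln_lt0 ?r_gt0.
Qed.

Lemma elog_le_root {y r : R} {T : nat} :
  (0 < T)%N -> (0 <= r)%R -> (y <= r ^+ T)%R -> (T%:R^-1)%:E * elog y <= elog r.
Proof.
move=> T_gt0 r_ge0 y_le; rewrite /elog; case: ifPn => y_gt0; last first.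
  by rewrite muleC gt0_mulNye ?leNye // lte_fin invr_gt0 ltr0n.
have r_gt0 : (0 < r)%R.
  rewrite lt_def r_ge0 andbT; apply: contraTneq y_le => ->.
  by rewrite expr0n gtn_eqF // -ltNge.
rewrite r_gt0 -EFinM lee_fin ler_pdivrMl ?ltr0n // mulr_natl -lnXn //.
by rewrite ler_ln ?posrE ?exprn_gt0.
Qed.

Lemma limn_esup_le (u : (\bar R)^nat) l :
  (\forall n \near \oo, u n <= l) -> limn_esup u <= l.
Proof.
move=> [k _ ul]; rewrite /limn_esup limf_esupE; apply: ge_ereal_inf.
exists (ereal_sup (u @` [set n | (k <= n)%N])); last first.
  by apply: ge_ereal_sup => _ [n /ul ? <-].
by exists [set n | (k <= n)%N] => //; exists k.
Qed.

End extended_log.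

Theorem proposition1 (R : realType) (M N : nat) (leMN : (M <= N)%N)
  (F : 'cV[R]_M -> 'cV[R]_M) (B : 'M[R]_(N, M)) (Bp : 'M[R]_(M, N))
  (alpha : R) :
  (forall z, differentiable F z) ->
  \rank B = M ->
  is_MP_pinv B Bp ->
  has_ubound (range (fun z => spec_norm (jac F z))) ->
  1 < sup (range (fun z => spec_norm (jac F z))) ->
  1 - (sup (range (fun z => spec_norm (jac F z))))^-1 < alpha ->
  alpha <= 1 ->
  let rho := (1 - alpha) * sup (range (fun z => spec_norm (jac F z))) in
  [/\ rho < 1,
      (forall (x : nat -> 'cV[R]_N) (t : nat) (z : 'cV[R]_M),
          spec_norm (jac (forced_map F alpha B Bp x t) z) <= rho),
      (forall (x : nat -> 'cV[R]_N) (z0 : 'cV[R]_M),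
          (lyap_gtf F alpha B Bp x z0 <= elog rho)%E)
    & (elog rho < 0)%E].
Proof.
move=> dF rankB MP_Bp JF_ub; set s := sup _ => s_gt1 alpha_gt alpha_le1 rho.
have JF_le_s z : spec_norm (jac F z) <= s by apply: (ub_le_sup JF_ub); exists z.
have BpB : Bp *m B = 1%:M.
  by apply: MP_pinv_left_inverse MP_Bp; rewrite /row_full rankB.
have s_gt0 : 0 < s := lt_trans ltr01 s_gt1.
have rho_ge0 : 0 <= rho by rewrite /rho mulr_ge0 ?subr_ge0 // ltW.
have rho_lt1 : rho < 1.
  by rewrite /rho -ltr_pdivlMr // mul1r ltrBlDl -ltrBlDr.
have J_le_rho x t z : spec_norm (jac (forced_map F alpha B Bp x t) z) <= rho.
  rewrite /rho -[1 - alpha]ger0_norm ?subr_ge0 //.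
  exact: spec_norm_jac_forced_map_le.
split => // [x z0|]; last exact: elog_lt0.
apply: limn_esup_le; near=> T.
have JT_le := spec_norm_forced_jac_prod_le _ z0 T rho_ge0 (J_le_rho x).
apply: elog_le_root _ rho_ge0 JT_le.
near: T; exact: nbhs_infty_gt.
Unshelve. all: by end_near.
Qed.
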